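(* Let $G=(V,E)$ be a connected undirected policy graph with $V=\mathcal{T}=\{v_1,\dots,v_k\}$ (no vertex $\bot$), and let $\mathbf{W}$ be a workload with $k$ columns. Fix a value $v=v_i\in V$. Let $G'=(V',E')$ with $V'=V\setminus\{v\}\cup\{\bot\}$ and $E'=E\setminus\{(v,u):u\in V\}\cup\{(\bot,u):(v,u)\in E\}$. For a database $\mathbf{x}\in\mathbb{R}^k$ let $\mathbf{x}_{-v}\in\mathbb{R}^{k-1}$ be $\mathbf{x}$ with the entry $\mathbf{x}[v]$ removed, and let $\mathbf{W}'=\mathbf{W}\mathbf{D}$ where $\mathbf{D}$ is the $k\times(k-1)$ matrix $$\mathbf{D}=\begin{pmatrix}\mathbf{I}_{i-1} & \mathbf{0}\\ -\mathbf{1}_{i-1}^\top & -\mathbf{1}_{k-i}^\top\\ \mathbf{0} & \mathbf{I}_{k-i}\end{pmatrix}$$ ($\mathbf{I}_j$ the $j\times j$ identity, $\mathbf{1}_j$ the all-ones vector of length $j$). Then: (i) $\mathbf{W}\mathbf{x}=\mathbf{W}'\mathbf{x}_{-v}+\mathbf{c}(\mathbf{W},n)$, where $n=\sum_{j}\mathbf{x}[j]$ is the database size and $\mathbf{c}(\mathbf{W},n)$ is a vector depending only on $\mathbf{W}$ and $n$; and (ii) any two databases $\mathbf{y},\mathbf{z}$ are neighbors under $G$ if and only if $\mathbf{y}_{-v}$ and $\mathbf{z}_{-v}$ are neighbors under $G'$.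
   Context: Databases are histogram vectors indexed by $\mathcal{T}$. Blowfish neighbors under a policy graph $H=(V_H,E_H)$, $V_H\subseteq\mathcal{T}\cup\{\bot\}$: two databases are neighbors iff they differ in the value of exactly one record, $u$ in one and $w$ in the other, with $(u,w)\in E_H$ (vector difference $\pm(\mathbf{e}_u-\mathbf{e}_w)$), or one is obtained from the other by adding a single record of value $u$ with $(u,\bot)\in E_H$ (vector difference $\pm\mathbf{e}_u$). Since $G$ has no $\bot$, neighbors under $G$ have the same size $n$. *)

From HB Require Import structures.
From mathcomp Require Import all_boot all_order all_algebra.
Set Implicit Arguments. Unset Strict Implicit. Unset Printing Implicit Defensive.
Import Order.TTheory GRing.Theory Num.Theory.
Local Open Scope ring_scope.

(* Values of the domain T = {v_1,...,v_n} are 'I_n.  A policy graph on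
   T ∪ {⊥} is a relation on option 'I_n, with None standing for ⊥. *)

(* A database is a histogram: a column vector with natural-number entries. *)
Definition is_db (R : numDomainType) (n : nat) (x : 'cV[R]_n) : Prop :=
  forall j : 'I_n, exists c : nat, x j 0 = c%:R.

Definition db_size (R : numDomainType) (n : nat) (x : 'cV[R]_n) : R :=
  \sum_(j < n) x j 0.

Definition evec (R : numDomainType) (n : nat) (u : 'I_n) : 'cV[R]_n :=
  delta_mx u 0.

Definition blowfish_nbr (R : numDomainType) (n : nat) (H : rel (option 'I_n))
    (y z : 'cV[R]_n) : Prop :=
  (exists u w : 'I_n, H (Some u) (Some w) /\
      (y - z = evec R u - evec R w \/ z - y = evec R u - evec R w))
  \/ (exists u : 'I_n, H (Some u) None /\ (y - z = evec R u \/ z - y = evec R u)).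

Definition noBot (n : nat) (E : rel 'I_n) : rel (option 'I_n) :=
  fun a b => match a, b with
             | Some a, Some b => E a b
             | _, _ => false
             end.

(* The graph G' on V' = V \ {v} ∪ {⊥}: the vertex Some j stands for the
   value lift v j (the j-th remaining value, in order), None stands for ⊥.
   Edges: those of E not incident to v, plus (⊥,u) for every (v,u) ∈ E
   (in both directions, the graph being undirected). *)
Definition bot_graph (k : nat) (E : rel 'I_k.+1) (v : 'I_k.+1) : rel (option 'I_k) :=
  fun a b => match a, b with
             | Some a, Some b => E (lift v a) (lift v b)
             | None, Some b => E v (lift v b)
             | Some a, None => E (lift v a) v
             | None, None => false
             end.

Definition drop_v (R : numDomainType) (k : nat) (v : 'I_k.+1) (x : 'cV[R]_k.+1)
  : 'cV[R]_k := \col_(j < k) x (lift v j) 0.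

(* The k×(k-1) matrix D = [I_{i-1} 0; -1^T -1^T; 0 I_{k-i}] (row v is all -1). *)
Definition Dmat (R : numDomainType) (k : nat) (v : 'I_k.+1) : 'M[R]_(k.+1, k) :=
  \matrix_(r < k.+1, c < k) (if r == v then -1 else (r == lift v c)%:R).

From HB Require Import structures.
From mathcomp Require Import all_boot all_order all_algebra.
Import Order.TTheory GRing.Theory Num.Theory.
Local Open Scope ring_scope.
Set Implicit Arguments. Unset Strict Implicit.

(* Every vector splits as d = D d_{-v} + (sum of d) e_v, because row v of D
   carries minus the sum of the remaining entries.  Multiplying by W gives (i)
   with c(W, n) = n W e_v.  For (ii), databases of equal size that are
   neighbours under G differ by e_u - e_w; removing coordinate v turns this
   into a difference of basis vectors, or into ±e_u when an endpoint is v,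
   i.e. an edge to ⊥ in G'.  Conversely a difference of total size 0 is
   recovered from its restriction by the splitting above. *)

Section DropCoordinate.
Variables (R : numDomainType) (k : nat) (v : 'I_k.+1).

Lemma drop_vB (a b : 'cV[R]_k.+1) : drop_v v (a - b) = drop_v v a - drop_v v b.
Proof. by apply/matrixP => i j; rewrite !mxE. Qed.

Lemma db_sizeB (a b : 'cV[R]_k.+1) : db_size (a - b) = db_size a - db_size b.
Proof. by rewrite /db_size -sumrB; apply: eq_bigr => i _; rewrite !mxE. Qed.

Lemma db_size_evec (u : 'I_k.+1) : db_size (evec R u) = 1.
Proof.
rewrite /db_size (bigD1 u) //= big1 ?addr0; first by rewrite !mxE !eqxx.
by move=> i /negbTE neq_iu; rewrite !mxE neq_iu.
Qed.

Lemma lift_eq_self (j : 'I_k) : (lift v j == v) = false.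
Proof. by rewrite eq_sym (negbTE (neq_lift v j)). Qed.

Lemma drop_v_evec_lift (j : 'I_k) : drop_v v (evec R (lift v j)) = evec R j.
Proof. by apply/matrixP => i c; rewrite !mxE ord1 (inj_eq (@lift_inj _ v)). Qed.

Lemma drop_v_evec_self : drop_v v (evec R v) = 0.
Proof. by apply/matrixP => i c; rewrite !mxE lift_eq_self. Qed.

Lemma Dmat_drop_v_decomp (d : 'cV[R]_k.+1) :
  d = Dmat R v *m drop_v v d + db_size d *: evec R v.
Proof.
apply/matrixP => r c; rewrite ord1 !mxE.
under eq_bigr do rewrite !mxE.
rewrite /db_size (bigD1_ord v) //=.
case: (unliftP v r) => [r' ->|->].
- rewrite lift_eq_self mulr0 addr0 (bigD1 r') //= big1 ?addr0.
    by rewrite eqxx mul1r.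
  by move=> j /negbTE neq_jr; rewrite (inj_eq (@lift_inj _ v)) eq_sym neq_jr mul0r.
- under eq_bigr do rewrite eqxx mulN1r.
  by rewrite eqxx mulr1 sumrN addrCA addNr addr0.
Qed.

Lemma Dmat_evec (j : 'I_k) : Dmat R v *m evec R j = evec R (lift v j) - evec R v.
Proof.
have := Dmat_drop_v_decomp (evec R (lift v j)).
by rewrite drop_v_evec_lift db_size_evec scale1r => {1}->; rewrite addrK.
Qed.

End DropCoordinate.

Definition blowfish_step (R : numDomainType) (n : nat) (H : rel (option 'I_n))
    (d : 'cV[R]_n) : Prop :=
  (exists u w : 'I_n, H (Some u) (Some w) /\ d = evec R u - evec R w)
  \/ (exists u : 'I_n, H (Some u) None /\ d = evec R u).

Lemma blowfish_nbrE (R : numDomainType) (n : nat) (H : rel (option 'I_n))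
    (y z : 'cV[R]_n) :
  blowfish_nbr H y z <-> blowfish_step H (y - z) \/ blowfish_step H (z - y).
Proof.
split.
- case=> [[u [w [Huw [e|e]]]]|[u [Hu [e|e]]]].
  + by left; left; exists u, w.
  + by right; left; exists u, w.
  + by left; right; exists u.
  + by right; right; exists u.
- case=> [[[u [w [Huw e]]]|[u [Hu e]]]|[[u [w [Huw e]]]|[u [Hu e]]]].
  + by left; exists u, w; split => //; left.
  + by right; exists u; split => //; left.
  + by left; exists u, w; split => //; right.
  + by right; exists u; split => //; right.
Qed.

Lemma blowfish_nbrC (R : numDomainType) (n : nat) (H : rel (option 'I_n))
    (y z : 'cV[R]_n) :
  blowfish_nbr H y z -> blowfish_nbr H z y.
Proof. by move/blowfish_nbrE => nbr_yz; apply/blowfish_nbrE; tauto. Qed.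

Section BotGraph.
Variables (R : numDomainType) (k : nat) (E : rel 'I_k.+1) (v : 'I_k.+1).
Hypotheses (E_sym : symmetric E) (E_irr : irreflexive E).

Lemma blowfish_step_drop_v (y z : 'cV[R]_k.+1) :
  blowfish_step (noBot E) (y - z) ->
  blowfish_nbr (bot_graph E v) (drop_v v y) (drop_v v z).
Proof.
case=> [[u [w [Euw yz]]]|[u [//]]].
apply/blowfish_nbrE; rewrite -!drop_vB -[z - y]opprB yz opprB !drop_vB.
case: (unliftP v u) Euw => [u' ->|->] Euw; case: (unliftP v w) Euw => [w' ->|->] Euw.
- by left; left; exists u', w'; rewrite !drop_v_evec_lift.
- by left; right; exists u'; rewrite drop_v_evec_lift drop_v_evec_self subr0.
- right; right; exists w'; split; first by rewrite /= E_sym.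
  by rewrite drop_v_evec_lift drop_v_evec_self subr0.
- by rewrite /= E_irr in Euw.
Qed.

Lemma drop_v_blowfish_step (y z : 'cV[R]_k.+1) :
  db_size y = db_size z ->
  blowfish_step (bot_graph E v) (drop_v v y - drop_v v z) ->
  blowfish_step (noBot E) (y - z).
Proof.
move=> eq_size step_yz.
rewrite (Dmat_drop_v_decomp v (y - z)) db_sizeB eq_size subrr scale0r addr0 drop_vB.
case: step_yz => [[u [w [Euw ->]]]|[u [Eu ->]]]; left.
- exists (lift v u), (lift v w); split => //.
  by rewrite mulmxBr !Dmat_evec opprB addrA subrK.
- by exists (lift v u), v; split => //; rewrite Dmat_evec.
Qed.

End BotGraph.

Theorem lemma4p9 (R : realFieldType) (k : nat) (E : rel 'I_k.+1) (v : 'I_k.+1) :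
  symmetric E -> irreflexive E -> (forall a b : 'I_k.+1, connect E a b) ->
  (forall m : nat, exists c : 'M[R]_(m, k.+1) -> R -> 'cV[R]_m,
     forall (W : 'M[R]_(m, k.+1)) (x : 'cV[R]_k.+1), is_db x ->
       W *m x = (W *m Dmat R v) *m drop_v v x + c W (db_size x))
  /\
  (forall y z : 'cV[R]_k.+1, is_db y -> is_db z -> db_size y = db_size z ->
     (blowfish_nbr (noBot E) y z <->
      blowfish_nbr (bot_graph E v) (drop_v v y) (drop_v v z))).
Proof.
move=> E_sym E_irr _; split.
  move=> m; exists (fun W n => n *: (W *m evec R v)) => W x _.
  by rewrite {1}(Dmat_drop_v_decomp v x) mulmxDr mulmxA scalemxAr.
move=> y z _ _ eq_size; split.
- case/blowfish_nbrE => /(blowfish_step_drop_v v E_sym E_irr) //.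
  exact: blowfish_nbrC.
- case/blowfish_nbrE => [step_yz | step_zy]; apply/blowfish_nbrE.
  + by left; apply: drop_v_blowfish_step step_yz.
  + by right; apply: drop_v_blowfish_step step_zy.
Qed.
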